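(* Let $\Phi$ be an automorphism of $(Ass\text{-}\mathbf K)^0$ that fixes every object. Then for every object $A$, the main function satisfies $s_A(f_A(\mathbf K))=f_A(\mathbf K)$; that is, $s_A$ restricts to a permutation of the set $f_A(\mathbf K)$ of scalars of $A$.
   Context: $\mathbf K$ is an infinite field. A $\mathbf K$-algebra is an associative ring $A$ with unit together with a unital ring homomorphism $f_A:\mathbf K\to Z(A)$ into the center of $A$. Homomorphisms are unital ring homomorphisms $\nu:A\to B$ with $\nu\circ f_A=f_B$. $(Ass\text{-}\mathbf K)^0$ is the category of free associative $\mathbf K$-algebras (noncommutative polynomial algebras $\mathbf K\langle X\rangle$) on finite subsets $X$ of a fixed infinite set $X_0$, with all $\mathbf K$-algebra homomorphisms. $F_1$ denotes the free algebra on a single $x_0\in X_0$. For an object $A$ and $a\in A$, $\alpha_a:F_1\to A$ is the homomorphism with $x_0\mapsto a$. For an automorphism $\Phi$ fixing $F_1$, the main function is $s_A(a)=\Phi(\alpha_a)(x_0)$, so $\Phi(\mu)=s_B\circ\mu\circ s_A^{-1}$. *)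

(* free associative algebras are realized with the
   multinomials library as monoid algebras {malg K[{fmonom X}]} over the
   free monoid {fmonom X} on a finite set X of variables. *)
From HB Require Import structures.
From mathcomp Require Import all_boot all_order all_algebra.
From mathcomp Require Import finmap.
From mathcomp.multinomials Require Import monalg.

Set Implicit Arguments.
Unset Strict Implicit.
Unset Printing Implicit Defensive.

Import GRing.Theory.
Local Open Scope ring_scope.


Section MalgAlgebra.
Context (M : monomType) (R : comRingType).

Lemma malgC_comm (c : R) (g : {malg R[M]}) : g * c%:MP = c%:MP * g.
Proof.
rewrite [g]monalgE mulr_suml mulr_sumr; apply: eq_bigr => k _.
by rewrite !malgM_def fgmulUU fgmulUU mulrC mulm1 mul1m.
Qed.

End MalgAlgebra.

Definition infinite_field (K : fieldType) : Prop :=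
  forall s : seq K, exists x : K, x \notin s.

(* The fixed infinite set of variables X_0 is nat; objects of
   (Ass-K)^0 are indexed by finite subsets X of X_0. *)
Definition FA (K : fieldType) (X : {fset nat}) := {malg K[{fmonom X}]}.

(* K-algebra homomorphisms: unital ring homomorphisms nu with
   nu \o f_A = f_B, where f_A c = c%:A is the structure map. *)
Definition is_Khom (K : fieldType) (X Y : {fset nat}) (f : FA K X -> FA K Y)
  : Prop :=
  [/\ f 1 = 1, {morph f : x y / x + y}, {morph f : x y / x * y}
    & forall c : K, f (c%:A) = c%:A].

Definition Hom (K : fieldType) (X Y : {fset nat}) :=
  {f : FA K X -> FA K Y | is_Khom f}.

Lemma is_Khom_comp (K : fieldType) (X Y Z : {fset nat})
  (g : FA K Y -> FA K Z) (f : FA K X -> FA K Y) :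
  is_Khom g -> is_Khom f -> is_Khom (g \o f).
Proof.
move=> [g1 gD gM gC] [f1 fD fM fC]; split=> /=.
- by rewrite f1 g1.
- by move=> x y /=; rewrite fD gD.
- by move=> x y /=; rewrite fM gM.
- by move=> c /=; rewrite fC gC.
Qed.

Definition compH (K : fieldType) (X Y Z : {fset nat})
  (g : Hom K Y Z) (f : Hom K X Y) : Hom K X Z :=
  exist _ (sval g \o sval f) (is_Khom_comp (svalP g) (svalP f)).

Lemma is_Khom_id (K : fieldType) (X : {fset nat}) : is_Khom (@id (FA K X)).
Proof. by split. Qed.

Definition idH (K : fieldType) (X : {fset nat}) : Hom K X X :=
  exist _ id (is_Khom_id K X).

(* An automorphism of the category (Ass-K)^0 fixing every object:
   a functor that is the identity on objects and bijective on every
   hom-set (hence an isomorphism of categories). *)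
Record obj_fixing_auto (K : fieldType) := ObjFixingAuto {
  phi : forall X Y : {fset nat}, Hom K X Y -> Hom K X Y;
  phi_comp : forall (X Y Z : {fset nat}) (g : Hom K Y Z) (f : Hom K X Y),
      phi (compH g f) = compH (phi g) (phi f);
  phi_id : forall X : {fset nat}, phi (idH K X) = idH K X;
  phi_bij : forall X Y : {fset nat}, bijective (@phi X Y)
}.

Definition X1 (x0 : nat) : {fset nat} := [fset x0]%fset.

Definition F1gen (K : fieldType) (x0 : nat) : FA K (X1 x0) :=
  << fmu ([` fset11 x0]%fset : X1 x0) >>.

Section Alpha.
Context (I : choiceType) (A : ringType) (a : A).

Definition pow_size (m : {fmonom I}) : A := a ^+ size (fmonom_val m).

Lemma pow_size_mmorphism : mmorphism pow_size.
Proof.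
split; last by rewrite /pow_size fm1.
by move=> m1 m2; rewrite /pow_size fmM size_cat exprD.
Qed.

HB.instance Definition _ := isMultiplicative.Build _ _ pow_size
  pow_size_mmorphism.
End Alpha.

Definition alpha_fun (K : fieldType) (x0 : nat) (Y : {fset nat}) (a : FA K Y)
  : FA K (X1 x0) -> FA K Y :=
  mmap (in_alg (FA K Y)) (pow_size a).

Lemma alpha_is_Khom (K : fieldType) (x0 : nat) (Y : {fset nat}) (a : FA K Y) :
  is_Khom (@alpha_fun K x0 Y a).
Proof.
rewrite /alpha_fun; split.
- exact: mmap1.
- exact: mmapD.
- apply: (commr_mmap_is_multiplicative _).1 => g m m'.
  by rewrite /GRing.comm /= -mul_malgC mulr1 malgC_comm.
- move=> c; rewrite mmapZ mmap1 mulr1 //.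
Qed.

(* alpha_a : F_1 -> A, x0 |-> a *)
Definition alpha (K : fieldType) (x0 : nat) (Y : {fset nat}) (a : FA K Y)
  : Hom K (X1 x0) Y := exist _ (@alpha_fun K x0 Y a) (@alpha_is_Khom K x0 Y a).

Definition main_fun (K : fieldType) (x0 : nat) (Phi : obj_fixing_auto K)
  (Y : {fset nat}) (a : FA K Y) : FA K Y :=
  sval (phi Phi (@alpha K x0 Y a)) (F1gen K x0).

(** A scalar [c] of [A] is the image of the scalar [c] of the free algebra
    [F_0 = K] on no variables under the unique homomorphism [iota : F_0 -> A];
    hence [alpha_c] factors as [iota \o alpha_c] and
    [s_A(c) = Phi(iota)(s_{F_0}(c))].  Every homomorphism out of [F_0] maps
    into the scalars, which gives [s_A(K) \subset K].  Conversely
    [Hom(F_1, F_0)] consists exactly of the [alpha_c], [c] in [K], and [Phi]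
    is bijective on it, so [s_{F_0}] is onto [K]; applying [Phi(iota)], which
    fixes scalars, gives surjectivity of [s_A] on [K]. *)
From Pilot Require Import Defs.
From HB Require Import structures.
From mathcomp Require Import all_boot all_order all_algebra.
From mathcomp Require Import finmap.
From mathcomp.multinomials Require Import monalg.
From Stdlib Require Import FunctionalExtensionality ProofIrrelevance.
Set Implicit Arguments.
Unset Strict Implicit.
Unset Printing Implicit Defensive.

Local Open Scope ring_scope.
Import GRing.Theory.

Local Notation "1" := (@mone _) : monom_scope.

Section KHomomorphisms.
Variable K : fieldType.

Lemma Hom_ext (X Y : {fset nat}) (f g : Defs.Hom K X Y) : sval f =1 sval g -> f = g.
Proof.
case: f g => [f fK] [g gK] /= /functional_extensionality efg; subst g.
by rewrite (proof_irrelevance _ fK gK).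
Qed.

Lemma alg_malgC (X : {fset nat}) (c : K) : (c%:A : FA K X) = c%:MP.
Proof. by rewrite -mul_malgC mulr1. Qed.

Lemma malgU_alg (X : {fset nat}) (c : K) (k : {fmonom X}) :
  << c *g k >> = (c%:A : FA K X) * << k >>.
Proof. by rewrite alg_malgC malgM_def fgmulUU mulr1 mul1m. Qed.

Lemma mcoeff1_alg (X : {fset nat}) (c : K) : (c%:A : FA K X)@_1%M = c.
Proof. by rewrite alg_malgC mcoeffC eqxx mulr1n. Qed.

Section KhomTheory.
Variables (X Y : {fset nat}) (f : FA K X -> FA K Y).
Hypothesis fK : is_Khom f.

Lemma Khom_alg (c : K) : f c%:A = c%:A.
Proof. by case: fK. Qed.

Lemma Khom_sum (I : Type) (r : seq I) (F : I -> FA K X) :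
  f (\sum_(i <- r) F i) = \sum_(i <- r) f (F i).
Proof.
case: fK => _ fD _ _; elim: r => [|i r IHr]; last by rewrite !big_cons fD IHr.
by rewrite !big_nil -(scale0r (1 : FA K X)) Khom_alg scale0r.
Qed.

Lemma Khom_exp (a : FA K X) (n : nat) : f (a ^+ n) = f a ^+ n.
Proof.
case: fK => f1 _ fM _; elim: n => [|n IHn]; first by rewrite !expr0 f1.
by rewrite !exprS fM IHn.
Qed.

Lemma Khom_malgU (c : K) (k : {fmonom X}) : f << c *g k >> = c%:A * f << k >>.
Proof. by case: fK => _ _ fM _; rewrite malgU_alg fM Khom_alg. Qed.

End KhomTheory.

Definition F0 : {fset nat} := fset0.

Lemma FA0_monom (k : {fmonom F0}) : k = 1%M.
Proof.
case: k => [[|[x x_in] s]]; first by apply/eqP; rewrite fmP fm1.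
by exfalso; move: x_in; rewrite inE.
Qed.

Lemma FA0_alg (g : FA K F0) : g = (g@_1%M)%:A.
Proof.
by apply/malgP => k; rewrite (FA0_monom k) mcoeff1_alg.
Qed.

Lemma Khom_FA0 (Y : {fset nat}) (h : FA K F0 -> FA K Y) (g : FA K F0) :
  is_Khom h -> h g = (g@_1%M)%:A.
Proof. by move=> hK; rewrite {1}(FA0_alg g) (Khom_alg hK). Qed.

Definition iota_fun (Y : {fset nat}) : FA K F0 -> FA K Y :=
  mmap (in_alg (FA K Y)) (@pow_size (F0 : choiceType) (FA K Y) 1).

Lemma iota_is_Khom (Y : {fset nat}) : is_Khom (iota_fun Y).
Proof.
rewrite /iota_fun; split; [exact: mmap1 | exact: mmapD | | ].
- apply: (commr_mmap_is_multiplicative _).1 => g m m'.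
  by rewrite /GRing.comm /= -mul_malgC mulr1 malgC_comm.
- by move=> c; rewrite mmapZ mmap1 mulr1.
Qed.

Definition iotaH (Y : {fset nat}) : Defs.Hom K F0 Y :=
  exist _ (iota_fun Y) (iota_is_Khom Y).

Section FA1.
Variable x0 : nat.

Lemma FA1_malgU (k : {fmonom X1 x0}) : << k >> = F1gen K x0 ^+ size k :> FA K _.
Proof.
case: k => s; elim: s => [|x s IHs] /=.
  have -> : FMonom [::] = 1%M :> {fmonom X1 x0} by apply/eqP; rewrite fmP fm1.
  by rewrite expr0 -mpolyC1E.
have -> : FMonom (x :: s) = mmul (fmu x) (FMonom s) :> {fmonom X1 x0}.
  by apply/eqP; rewrite fmP fmM fmU.
have -> : x = [` fset11 x0]%fset.
  by apply: val_inj; case: x => v /=; rewrite inE => /eqP.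
by rewrite -[X in << X *g _ >>](mulr1 1) -fgmulUU -malgM_def IHs exprS.
Qed.

Lemma Khom_FA1 (Y : {fset nat}) (f : FA K (X1 x0) -> FA K Y) (g : FA K _) :
  is_Khom f -> f g = \sum_(k <- msupp g) (g@_k)%:A * f (F1gen K x0) ^+ size k.
Proof.
move=> fK; rewrite {1}(monalgE g) (Khom_sum fK).
by apply: eq_bigr => k _; rewrite (Khom_malgU fK) FA1_malgU (Khom_exp fK).
Qed.

Lemma Hom_FA1_ext (Y : {fset nat}) (f g : Defs.Hom K (X1 x0) Y) :
  sval f (F1gen K x0) = sval g (F1gen K x0) -> f = g.
Proof.
move=> efg; apply: Hom_ext => h.
by rewrite (Khom_FA1 h (svalP f)) (Khom_FA1 h (svalP g)) efg.
Qed.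

Lemma alpha_F1gen (Y : {fset nat}) (a : FA K Y) :
  sval (alpha x0 a) (F1gen K x0) = a.
Proof.
by rewrite /= /alpha_fun /F1gen mmapU /= /pow_size fmU expr1 scale1r mul1r.
Qed.

Lemma Hom_FA1_FA0 (f : Defs.Hom K (X1 x0) F0) :
  f = alpha x0 ((sval f (F1gen K x0))@_1%M)%:A.
Proof. by apply: Hom_FA1_ext; rewrite alpha_F1gen -FA0_alg. Qed.

Lemma alpha_alg (Y : {fset nat}) (c : K) :
  alpha x0 (c%:A : FA K Y) = compH (iotaH Y) (alpha x0 c%:A).
Proof.
apply: Hom_FA1_ext; rewrite alpha_F1gen.
rewrite -[RHS]/(iota_fun Y (sval (alpha x0 c%:A) (F1gen K x0))) alpha_F1gen.
by rewrite (Khom_alg (iota_is_Khom Y)).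
Qed.

Lemma main_fun_alg (Phi : obj_fixing_auto K) (Y : {fset nat}) (c : K) :
  main_fun x0 Phi (c%:A : FA K Y) =
  sval (phi Phi (iotaH Y)) (main_fun x0 Phi (c%:A : FA K F0)).
Proof. by rewrite /main_fun alpha_alg phi_comp. Qed.

End FA1.

End KHomomorphisms.

Theorem mainTheorem7 (K : fieldType) (K_inf : infinite_field K) (x0 : nat)
  (Phi : obj_fixing_auto K) (Y : {fset nat}) :
  (forall c : K, exists d : K, main_fun x0 Phi (c%:A : FA K Y) = d%:A) /\
  (forall d : K, exists c : K, main_fun x0 Phi (c%:A : FA K Y) = d%:A).
Proof.
have iotaK := svalP (phi Phi (iotaH K Y)).
split=> [c | d].
  by rewrite main_fun_alg (Khom_FA0 _ iotaK); eexists.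
have [psi phiK psiK] := phi_bij Phi (X1 x0) F0.
pose gam := psi (alpha x0 (d%:A : FA K F0)).
exists ((sval gam (F1gen K x0))@_1%M).
rewrite main_fun_alg /main_fun -(Hom_FA1_FA0 gam) /gam psiK alpha_F1gen.
by rewrite (Khom_FA0 _ iotaK) mcoeff1_alg.
Qed.
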